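(* Let $m\ge 1$ and $x\in RF(m)$. Then for every choice, for each $k\in\{1,\dots,m-1\}$, of one of the two forms $[\omega,x_k]$ or $[x_k,\omega]$, there exist integers $\alpha_1,\dots,\alpha_m$ and elements $\omega_1,\dots,\omega_{m-1}\in RF(m)$ such that $$x=x_m^{\alpha_m}x_{m-1}^{\alpha_{m-1}}\cdots x_1^{\alpha_1}\,z_1z_2\cdots z_{m-1},$$ where $z_k=[\omega_k,x_k]$ or $z_k=[x_k,\omega_k]$ according to the chosen form.
   Context: $RF(m)$ is the reduced free group on $x_1,\dots,x_m$: the quotient of the free group $F(x_1,\dots,x_m)$ by the relations that each $x_i$ commutes with every conjugate $\gamma x_i\gamma^{-1}$ of itself. Commutators are $[g,h]=g^{-1}h^{-1}gh$. *)

(* The reduced free group RF(m) is presented concretely: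
   elements are words in the letters x_i^{+1}, x_i^{-1} (i : 'I_m, where the
   ordinal i stands for the generator x_{i+1}), and equality in RF(m) is the
   congruence [rf_eq m] generated by free cancellation and the defining
   relations  x_i (g x_i g^-1) = (g x_i g^-1) x_i  for every word g. *)
From mathcomp Require Import all_boot all_order all_algebra.
Set Implicit Arguments. Unset Strict Implicit. Unset Printing Implicit Defensive.

(* a letter: (i, true) = x_{i+1}, (i, false) = x_{i+1}^{-1} *)
Definition letter (m : nat) := ('I_m * bool)%type.
Definition word (m : nat) := seq (letter m).

Definition flip {m} (a : letter m) : letter m := (a.1, ~~ a.2).

Definition winv {m} (w : word m) : word m := rev (map flip w).
Definition gen {m} (i : 'I_m) : word m := [:: (i, true)].

Definition wpow {m} (i : 'I_m) (n : int) : word m :=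
  match n with
  | Posz k => nseq k (i, true)
  | Negz k => nseq k.+1 (i, false)
  end.

Definition wcomm {m} (g h : word m) : word m := winv g ++ winv h ++ g ++ h.

Inductive rf_eq (m : nat) : word m -> word m -> Prop :=
| rf_refl w : rf_eq w w
| rf_sym u v : rf_eq u v -> rf_eq v u
| rf_trans u v w : rf_eq u v -> rf_eq v w -> rf_eq u w
| rf_cancel (u v : word m) (a : letter m) :
    rf_eq (u ++ a :: flip a :: v) (u ++ v)
| rf_rel (u v g : word m) (i : 'I_m) :
    rf_eq (u ++ gen i ++ (g ++ gen i ++ winv g) ++ v)
          (u ++ (g ++ gen i ++ winv g) ++ gen i ++ v).

(* Induction on the number b of generators that may occur in x; let x_j be the
   next one.  Deleting x_j splits x as w x' with w in the normal closure N_j of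
   x_j, and x' = P Z is in normal form by induction.  Since N_j is abelian in
   RF(m), w = x_j^a v with v a product of commutators [mu_k, x_k] (k <> j,
   mu_k in N_j), and moving v to the right of P Z only conjugates it, which
   preserves that shape.  The crux is that x_k may be replaced by any conjugate
   y_k of x_k^{+-1}: rewriting [mu, x_k^e] in terms of y_k produces iterated
   commutators of mu with generators, and such a commutator vanishes as soon as
   a generator repeats, hence after m steps.  For a well-chosen y_k each
   [mu_k, y_k] is absorbed into the factor z_k of Z by changing omega_k, and
   deleting the generators beyond x_j removes all remaining commutators. *)

From mathcomp Require Import all_boot all_order all_algebra.
From Stdlib Require Import Setoid Morphisms.
Set Implicit Arguments. Unset Strict Implicit. Unset Printing Implicit Defensive.

Notation "u =R v" := (rf_eq u v) (at level 70).

Lemma rf_eq_ctx m (p q u v : word m) : u =R v -> p ++ u ++ q =R p ++ v ++ q.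
Proof.
elim=> {u v} [w | u v _ | u v w _ uv _ vw | u v a | u v g i].
- exact: rf_refl.
- exact: rf_sym.
- exact: rf_trans uv vw.
- by have := rf_cancel (p ++ u) (v ++ q) a; rewrite -!catA.
- by have := rf_rel (p ++ u) (v ++ q) g i; rewrite -!catA.
Qed.

#[global] Instance rf_eq_Equivalence m : Equivalence (@rf_eq m).
Proof. by split; [exact: rf_refl | exact: rf_sym | exact: rf_trans]. Qed.

#[global] Instance cat_rf_Proper m :
  Proper (@rf_eq m ==> @rf_eq m ==> @rf_eq m) cat.
Proof.
move=> u u' uu' v v' vv'; transitivity (u ++ v').
- by have := rf_eq_ctx u [::] vv'; rewrite !cats0.
- exact: (rf_eq_ctx [::] v' uu').
Qed.

#[global] Hint Resolve rf_refl : core.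

Lemma winv_cat m (u v : word m) : winv (u ++ v) = winv v ++ winv u.
Proof. by rewrite /winv map_cat rev_cat. Qed.

Lemma winvK m : involutive (@winv m).
Proof.
move=> w; rewrite /winv map_rev revK -map_comp -[RHS]map_id.
by apply: eq_map => -[i b]; rewrite /= /flip /= negbK.
Qed.

Lemma rf_catV m (w : word m) : w ++ winv w =R [::].
Proof.
elim: w => [|a w IH] //.
rewrite -cat1s winv_cat -catA (catA w) IH.
exact: (rf_cancel [::] [::] a).
Qed.

Lemma rf_Vcat m (w : word m) : winv w ++ w =R [::].
Proof. by have := rf_catV (winv w); rewrite winvK. Qed.

Lemma rf_catKV m (u w : word m) : u ++ (winv u ++ w) =R w.
Proof. by rewrite catA rf_catV. Qed.

Lemma rf_catK m (u w : word m) : winv u ++ (u ++ w) =R w.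
Proof. by rewrite catA rf_Vcat. Qed.

#[global] Instance winv_rf_Proper m : Proper (@rf_eq m ==> @rf_eq m) winv.
Proof.
move=> u v uv; transitivity (winv u ++ (v ++ winv v)); first by rewrite rf_catV cats0.
by rewrite catA -{1}uv rf_Vcat.
Qed.

Definition wconj m (g w : word m) : word m := winv g ++ w ++ g.

#[global] Instance wconj_rf_Proper m :
  Proper (@rf_eq m ==> @rf_eq m ==> @rf_eq m) (@wconj m).
Proof. by move=> g g' gg' w w' ww'; rewrite /wconj gg' ww'. Qed.

#[global] Instance wcomm_rf_Proper m :
  Proper (@rf_eq m ==> @rf_eq m ==> @rf_eq m) (@wcomm m).
Proof. by move=> u u' uu' v v' vv'; rewrite /wcomm uu' vv'. Qed.

(* Normalises both sides as right-nested concatenations of the atoms and their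
   inverses, then cancels adjacent inverse pairs: this proves free-group identities. *)
Ltac rf_group :=
  rewrite /wconj /wcomm ?winv_cat ?winvK -?catA;
  repeat first [rewrite rf_catKV | rewrite rf_catK | rewrite rf_catV
               | rewrite rf_Vcat | rewrite cats0];
  try reflexivity.

Section WordGroupIdentities.
Variable m : nat.
Implicit Types (a b c g h u v w : word m).

Lemma wconj_cat g u v : wconj g (u ++ v) =R wconj g u ++ wconj g v.
Proof. by rf_group. Qed.

Lemma wconjM g h w : wconj g (wconj h w) = wconj (h ++ g) w.
Proof. by rewrite /wconj winv_cat -!catA. Qed.

Lemma wconj_by_nil w : wconj [::] w = w.
Proof. by rewrite /wconj cats0. Qed.

Lemma wconj_nil g : wconj g [::] =R [::].
Proof. by rf_group. Qed.

Lemma winv_wconj g w : winv (wconj g w) = wconj g (winv w).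
Proof. by rewrite /wconj !winv_cat winvK catA. Qed.

Lemma wconjK g w : wconj (winv g) (wconj g w) =R w.
Proof. by rf_group. Qed.

Lemma wconjKV g w : wconj g (wconj (winv g) w) =R w.
Proof. by rf_group. Qed.

Lemma wconjC u v : u ++ v =R v ++ wconj v u.
Proof. by rf_group. Qed.

Lemma wcomm_wconjC c z y : wcomm (wconj (winv z) c) y ++ z =R z ++ wcomm c (wconj z y).
Proof. by rf_group. Qed.

Lemma wconj_wcommE a w : wconj a w =R w ++ wcomm w a.
Proof. by rf_group. Qed.

Lemma wcomm_nill w : wcomm [::] w =R [::].
Proof. by rf_group. Qed.

Lemma wcomm_nilr w : wcomm w [::] =R [::].
Proof. by rf_group. Qed.

Lemma wcomm_catl u v g : wcomm (u ++ v) g =R wconj v (wcomm u g) ++ wcomm v g.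
Proof. by rf_group. Qed.

Lemma wcomm_catr w a b : wcomm w (a ++ b) =R wcomm w b ++ wconj b (wcomm w a).
Proof. by rf_group. Qed.

Lemma wcomm_invr c b : wcomm c (winv b) =R winv (wcomm (wconj (winv b) c) b).
Proof. by rf_group. Qed.

Lemma wcomm_wconjr c h b :
  wcomm c (wconj h b) =R
  wcomm (wconj (winv h) c) b ++ wcomm (wcomm (wconj (winv h) c) b) h.
Proof. by rf_group. Qed.

End WordGroupIdentities.

Definition wcommute m (u v : word m) := u ++ v =R v ++ u.

#[global] Instance wcommute_rf_Proper m :
  Proper (@rf_eq m ==> @rf_eq m ==> iff) (@wcommute m).
Proof. by move=> u u' uu' v v' vv'; rewrite /wcommute uu' vv'. Qed.

Section Commuting.
Variable m : nat.
Implicit Types (g u v w : word m).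

Lemma wcommute_sym u v : wcommute u v -> wcommute v u.
Proof. by rewrite /wcommute => ->. Qed.

Lemma wcommute_nil u : wcommute u [::].
Proof. by rewrite /wcommute cats0. Qed.

Lemma wcommute_cat u v w : wcommute u v -> wcommute u w -> wcommute u (v ++ w).
Proof. by rewrite /wcommute => uv uw; rewrite catA uv -catA uw catA. Qed.

Lemma wcommute_inv u v : wcommute u v -> wcommute (winv u) v.
Proof.
rewrite /wcommute => uv.
transitivity (winv u ++ (v ++ u) ++ winv u); first by rewrite -catA rf_catV cats0.
by rewrite -uv -catA rf_catK.
Qed.

Lemma wcommute_wconj g u v : wcommute u v -> wcommute (wconj g u) (wconj g v).
Proof. by rewrite /wcommute => uv; rewrite -!wconj_cat uv. Qed.

Lemma wconj_id g u : wcommute g u -> wconj g u =R u.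
Proof. by rewrite /wcommute /wconj => <-; rewrite rf_catK. Qed.

Lemma wcomm1 u v : wcommute u v -> wcomm u v =R [::].
Proof. by rewrite /wcommute /wcomm => ->; rewrite rf_catK rf_Vcat. Qed.

End Commuting.

Inductive ncl m (i : 'I_m) : word m -> Prop :=
| ncl_nil : ncl i [::]
| ncl_cons g e w : ncl i w -> ncl i (wconj g [:: (i, e)] ++ w)
| ncl_eq w w' : ncl i w -> w =R w' -> ncl i w'.

#[global] Instance ncl_rf_Proper m (i : 'I_m) : Proper (@rf_eq m ==> iff) (ncl i).
Proof. by move=> u v uv; split=> ?; [apply: ncl_eq uv | apply: ncl_eq (rf_sym uv)]. Qed.

Section NormalClosure.
Variables (m : nat) (i : 'I_m).
Implicit Types (a b g h u v w : word m).

Lemma ncl_letter e : ncl i [:: (i, e)].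
Proof. by have := ncl_cons [::] e (ncl_nil i); rewrite wconj_by_nil cats0. Qed.

Lemma ncl_cat u v : ncl i u -> ncl i v -> ncl i (u ++ v).
Proof.
elim=> [|g e w _ IH|w w' _ IH ww'] nv //.
- by rewrite -catA; apply/ncl_cons/IH.
- by rewrite -ww'; apply: IH.
Qed.

Lemma ncl_wconj g u : ncl i u -> ncl i (wconj g u).
Proof.
elim=> [|h e w _ IH|w w' _ IH ww'].
- by rewrite wconj_nil; exact: ncl_nil.
- by rewrite wconj_cat wconjM; apply: ncl_cons.
- by rewrite -ww'.
Qed.

Lemma ncl_winv u : ncl i u -> ncl i (winv u).
Proof.
elim=> [|h e w _ IH|w w' _ IH ww'].
- exact: ncl_nil.
- rewrite winv_cat winv_wconj; apply: ncl_cat => //.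
  by have := ncl_cons h (~~ e) (ncl_nil i); rewrite cats0.
- by rewrite -ww'.
Qed.

Lemma ncl_wcomml a b : ncl i a -> ncl i (wcomm a b).
Proof.
move=> na; have -> : wcomm a b = winv a ++ wconj b a by rewrite /wcomm /wconj.
by apply: ncl_cat; [apply: ncl_winv | apply: ncl_wconj].
Qed.

Lemma ncl_wcommr a b : ncl i b -> ncl i (wcomm a b).
Proof.
move=> nb; have -> : wcomm a b = wconj a (winv b) ++ b by rewrite /wcomm /wconj -!catA.
by apply: ncl_cat => //; apply/ncl_wconj/ncl_winv.
Qed.

Lemma ncl_wpow (a : int) : ncl i (wpow i a).
Proof.
have nseq_ncl e k : ncl i (nseq k (i, e)).
  by elim: k => [|k IH]; [exact: ncl_nil | exact: (ncl_cat (ncl_letter e) IH)].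
by case: a => k; apply: nseq_ncl.
Qed.

(* The defining relations of RF(m) are the case of x_i and one conjugate of it. *)
Lemma ncl_commute u v : ncl i u -> ncl i v -> wcommute u v.
Proof.
have gen_commute_conj h : wcommute (gen i) (wconj h (gen i)).
  by have := rf_rel [::] [::] (winv h) i; rewrite !cats0 /= winvK.
have letter_conj_letter e e' h : wcommute [:: (i, e)] (wconj h [:: (i, e')]).
  have letter_gen e1 : wcommute [:: (i, e1)] (wconj h (gen i)).
    by case: e1; [exact: gen_commute_conj | exact: (wcommute_inv (gen_commute_conj h))].
  case: e'; first exact: letter_gen.
  by apply/wcommute_sym; rewrite -[[:: (i, false)]]/(winv (gen i)) -winv_wconj;
    apply/wcommute_inv/wcommute_sym.
have conj_conj g h e e' : wcommute (wconj g [:: (i, e)]) (wconj h [:: (i, e')]).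
  have := wcommute_wconj g (letter_conj_letter e e' (h ++ winv g)).
  by rewrite wconjM -catA rf_Vcat cats0.
have conj_ncl g e w : ncl i w -> wcommute (wconj g [:: (i, e)]) w.
  elim=> [|h e' w' _ IH|w' w'' _ IH ww'']; last by rewrite -ww''.
  - exact: wcommute_nil.
  - exact: wcommute_cat.
elim=> [|g e w _ IH|w w' _ IH ww'] nv; last by rewrite -ww'; apply: IH.
- exact/wcommute_sym/wcommute_nil.
- by apply/wcommute_sym/wcommute_cat; apply: wcommute_sym; [apply: conj_ncl | apply: IH].
Qed.

End NormalClosure.

Definition below m (b : nat) (w : word m) := all (fun a : letter m => a.1 < b) w.

Definition proj m (b : nat) (w : word m) := [seq a <- w | (a : letter m).1 < b].

Section Projection.
Variables (m b : nat).
Implicit Types (u v w : word m).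

Lemma proj_cat u v : proj b (u ++ v) = proj b u ++ proj b v.
Proof. exact: filter_cat. Qed.

Lemma proj_winv w : proj b (winv w) = winv (proj b w).
Proof. by rewrite /proj /winv filter_rev filter_map. Qed.

Lemma proj_wcomm u v : proj b (wcomm u v) = wcomm (proj b u) (proj b v).
Proof. by rewrite /wcomm !proj_cat !proj_winv. Qed.

Lemma proj_gen (k : 'I_m) : proj b (gen k) = if k < b then gen k else [::].
Proof. by rewrite /proj /=; case: ifP. Qed.

Lemma proj_below w : below b w -> proj b w = w.
Proof. exact/all_filterP. Qed.

Lemma below_proj w : below b (proj b w).
Proof. exact: (filter_all (fun a : letter m => a.1 < b)). Qed.

Lemma proj_wpow (k : 'I_m) (a : int) : k < b -> proj b (wpow k a) = wpow k a.
Proof. by move=> kb; apply: proj_below; case: a => n; rewrite /below all_nseq kb orbT. Qed.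

Lemma proj_rf_eq u v : u =R v -> proj b u =R proj b v.
Proof.
elim=> {u v} [w | u v _ | u v w _ uv _ vw | u v a | u v g i].
- by [].
- by move=> ->.
- by rewrite uv.
- by rewrite !proj_cat /proj /=; case: ifP => a_b; rewrite a_b //; apply: rf_cancel.
- rewrite !proj_cat proj_winv /proj /gen /=.
  by case: ifP => i_b; rewrite ?i_b ?cat0s //; apply: rf_rel.
Qed.

End Projection.

Lemma wpow_cons m (i : 'I_m) (e : bool) (a : int) :
  exists a' : int, [:: (i, e)] ++ wpow i a =R wpow i a'.
Proof.
case: e; case: a => [k|k].
- by exists (Posz k.+1).
- case: k => [|k]; first by exists 0%R; exact: (rf_cancel [::] [::] (i, true)).
  by exists (Negz k); exact: (rf_cancel [::] (nseq k.+1 (i, false)) (i, true)).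
- case: k => [|k]; first by exists (Negz 0).
  by exists (Posz k); exact: (rf_cancel [::] (nseq k (i, true)) (i, false)).
- by exists (Negz k.+1).
Qed.

Definition others m (j : 'I_m) := [seq k <- enum 'I_m | k != j].

Definition cprod m (l : seq 'I_m) (mu y : 'I_m -> word m) : word m :=
  flatten [seq wcomm (mu k) (y k) | k <- l].

Definition commspan m (j : 'I_m) (y : 'I_m -> word m) (v : word m) :=
  exists mu, (forall k, ncl j (mu k)) /\ v =R cprod (others j) mu y.

Definition gen_conj m (k : 'I_m) (w : word m) :=
  exists g e, w =R wconj g [:: (k, e)].

Lemma uniq_others m (j : 'I_m) : uniq (others j).
Proof. by rewrite filter_uniq ?enum_uniq. Qed.

Lemma mem_others m (j k : 'I_m) : (k \in others j) = (k != j).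
Proof. by rewrite mem_filter mem_enum andbT. Qed.

Lemma gen_conj_gen m (k : 'I_m) : gen_conj k (gen k).
Proof. by exists [::], true; rewrite wconj_by_nil. Qed.

Lemma ncl_gen_conj m (k : 'I_m) w : gen_conj k w -> ncl k w.
Proof. by case=> g [e ->]; apply/ncl_wconj/ncl_letter. Qed.

Lemma letter_gen_conj m (k : 'I_m) e w : gen_conj k w ->
  exists h, [:: (k, e)] =R wconj h w \/ [:: (k, e)] =R wconj h (winv w).
Proof.
case=> g [e' def_w]; exists (winv g).
have [e'e|/negPf ne'] := eqVneq e' e; first by left; rewrite def_w e'e wconjK.
right; rewrite def_w winv_wconj wconjK /winv /flip /=.
by move: ne'; clear def_w; case: e e' => -[].
Qed.

#[global] Instance commspan_rf_Proper m (j : 'I_m) y :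
  Proper (@rf_eq m ==> iff) (commspan j y).
Proof.
by move=> v v' vv'; split=> -[mu [nmu def_v]]; exists mu; split=> //;
  [rewrite -vv' | rewrite vv'].
Qed.

Section CommutatorProducts.
Variables (m : nat) (j : 'I_m).
Implicit Types (l : seq 'I_m) (mu y : 'I_m -> word m) (c v w : word m).

Lemma cprod_cons k l mu y : cprod (k :: l) mu y = wcomm (mu k) (y k) ++ cprod l mu y.
Proof. by []. Qed.

Lemma eq_in_cprod l mu y y' : {in l, y =1 y'} -> cprod l mu y = cprod l mu y'.
Proof. by move=> eq_y; congr flatten; apply/eq_in_map => k /eq_y ->. Qed.

Lemma cprod_ncl l mu y : (forall k, ncl j (mu k)) -> ncl j (cprod l mu y).
Proof.
move=> nmu; elim: l => [|k l IH]; first exact: ncl_nil.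
exact/ncl_cat/IH/ncl_wcomml.
Qed.

Lemma cprod_nil l y : cprod l (fun _ => [::]) y =R [::].
Proof. by elim: l => [|k l IH] //; rewrite cprod_cons IH wcomm_nill. Qed.

Lemma cprod_single l k c y : uniq l -> k \in l ->
  cprod l (fun i => if i == k then c else [::]) y =R wcomm c (y k).
Proof.
elim: l => [|i l IH] //= /andP[il ul]; rewrite in_cons cprod_cons.
have [<-|ik] /= := eqVneq i k; last by move=> kl; rewrite IH // wcomm_nill.
move=> _; set mu := fun i' => _.
have -> : cprod l mu y = cprod l (fun _ => [::]) y.
  congr flatten; apply/eq_in_map => i' i'l; rewrite /mu.
  by have [i'i|//] := eqVneq i' i; rewrite -i'i i'l in il.
by rewrite cprod_nil cats0.
Qed.

Lemma cprod_merge l mu mu' y : (forall k, ncl j (mu k)) -> (forall k, ncl j (mu' k)) ->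
  cprod l mu y ++ cprod l mu' y =R cprod l (fun k => mu k ++ mu' k) y.
Proof.
move=> nmu nmu'; elim: l => [|k l IH] //; rewrite !cprod_cons.
have swap : wcommute (cprod l mu y) (wcomm (mu' k) (y k)).
  by apply: (ncl_commute (i := j)); [apply: cprod_ncl | apply: ncl_wcomml].
rewrite -catA (catA (cprod l mu y)) swap -catA IH catA wcomm_catl wconj_id //.
by apply: (ncl_commute (i := j)) => //; apply: ncl_wcomml.
Qed.

Lemma cprod_winv l mu y : (forall k, ncl j (mu k)) ->
  winv (cprod l mu y) =R cprod l (fun k => winv (mu k)) y.
Proof.
move=> nmu; elim: l => [|k l IH] //; rewrite !cprod_cons.
have winv_wcomm : winv (wcomm (mu k) (y k)) =R wcomm (winv (mu k)) (y k).
  have -> : winv (wcomm (mu k) (y k)) = wconj (y k) (winv (mu k)) ++ mu k.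
    by rewrite /wcomm /wconj !winv_cat !winvK -!catA.
  have -> : wcomm (winv (mu k)) (y k) = mu k ++ wconj (y k) (winv (mu k)).
    by rewrite /wcomm /wconj winvK.
  by apply: (ncl_commute (i := j)) => //; apply/ncl_wconj/ncl_winv.
rewrite winv_cat IH winv_wcomm; apply: (ncl_commute (i := j)).
- by apply: cprod_ncl => i; apply: ncl_winv.
- by apply/ncl_wcomml/ncl_winv.
Qed.

Lemma commspan_nil y : commspan j y [::].
Proof. by exists (fun _ => [::]); split=> [k|]; [exact: ncl_nil | rewrite cprod_nil]. Qed.

Lemma commspan_cat y v w : commspan j y v -> commspan j y w -> commspan j y (v ++ w).
Proof.
move=> [mu [nmu ->]] [mu' [nmu' ->]].
exists (fun k => mu k ++ mu' k); split; last exact: cprod_merge.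
by move=> k; apply: ncl_cat.
Qed.

Lemma commspan_winv y v : commspan j y v -> commspan j y (winv v).
Proof.
move=> [mu [nmu ->]]; exists (fun k => winv (mu k)); split; last exact: cprod_winv.
by move=> k; apply: ncl_winv.
Qed.

Lemma commspan_ncl y v : commspan j y v -> ncl j v.
Proof. by move=> [mu [nmu ->]]; apply: cprod_ncl. Qed.

Lemma commspan_wcomm_y y k c : k != j -> ncl j c -> commspan j y (wcomm c (y k)).
Proof.
move=> kj nc; exists (fun i => if i == k then c else [::]); split.
- by move=> i; case: eqP => _ //; exact: ncl_nil.
- by rewrite cprod_single ?uniq_others ?mem_others.
Qed.

Lemma commspan_wcomm_Vy y k c : k != j -> ncl j c -> commspan j y (wcomm c (winv (y k))).
Proof. by move=> kj nc; rewrite wcomm_invr; apply/commspan_winv/commspan_wcomm_y/ncl_wconj. Qed.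

End CommutatorProducts.

Definition ncl_on m (S : {set 'I_m}) (c : word m) := forall i, i \in S -> ncl i c.

Section CommspanWcomm.
Variables (m : nat) (j : 'I_m) (y : 'I_m -> word m).
Hypothesis y_gen_conj : forall k, k != j -> gen_conj k (y k).
Implicit Types (c g v : word m) (S : {set 'I_m}).

Lemma wcomm_cons c (a : letter m) g :
  wcomm c (a :: g) =R wcomm c g ++ (wcomm c [:: a] ++ wcomm (wcomm c [:: a]) g).
Proof. by rewrite -cat1s wcomm_catr wconj_wcommE. Qed.

Lemma commspan_wcomm_word c g :
  (forall a, commspan j y (wcomm c [:: a]) /\
             forall g', commspan j y (wcomm (wcomm c [:: a]) g')) ->
  commspan j y (wcomm c g).
Proof.
move=> span_a; elim: g => [|a g IH]; first by rewrite wcomm_nilr; apply: commspan_nil.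
have [span_ca span_cag] := span_a a.
by rewrite wcomm_cons; apply: (commspan_cat IH); apply: commspan_cat.
Qed.

Lemma wcomm_letter_on S c k e : k \in S -> ncl_on S c -> wcomm c [:: (k, e)] =R [::].
Proof. by move=> kS nc; apply/wcomm1/(ncl_commute (nc _ kS))/ncl_letter. Qed.

Lemma commspan_wcomm_letter S c k e :
  (forall c', ncl_on (k |: S) c' -> forall g, commspan j y (wcomm c' g)) ->
  j \in S -> k \notin S -> ncl_on S c -> commspan j y (wcomm c [:: (k, e)]).
Proof.
move=> IH jS kS nc; have kj : k != j by apply: contraNneq kS => ->.
have [h [b [def_k [span_b nb]]]] : exists h b, [:: (k, e)] =R wconj h b /\
    (forall c', ncl j c' -> commspan j y (wcomm c' b)) /\ ncl k b.
  have nyk := ncl_gen_conj (y_gen_conj kj).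
  have [h [def_k|def_k]] := letter_gen_conj e (y_gen_conj kj); exists h.
  - by exists (y k); split=> //; split=> // c'; apply: commspan_wcomm_y.
  - exists (winv (y k)); split=> //; split; last exact: ncl_winv.
    by move=> c'; apply: commspan_wcomm_Vy.
rewrite def_k wcomm_wconjr; apply: commspan_cat; first exact/span_b/ncl_wconj/nc.
apply: IH => i; rewrite in_setU1 => /predU1P[->|iS]; first exact: ncl_wcommr.
exact/ncl_wcomml/ncl_wconj/nc.
Qed.

(* Induction on the number of generators outside S: for k in S the commutator
   [c, x_k^e] is trivial, and otherwise expanding it produces commutators lying
   in the normal closure of x_k as well. *)
Lemma commspan_wcomm_on t S c g : #|~: S| <= t -> j \in S -> ncl_on S c ->
  commspan j y (wcomm c g).
Proof.
elim: t S c g => [|t IHt] S c g leSt jS nc; apply: commspan_wcomm_word => -[k e].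
all: have [kS|kS] := boolP (k \in S); first by split=> [|g'];
  rewrite (wcomm_letter_on _ kS nc) ?wcomm_nill; apply: commspan_nil.
- by move: leSt; rewrite leqn0 cards_eq0 => /eqP/setP/(_ k); rewrite !inE (negPf kS).
have ltS : #|~: (k |: S)| <= t.
  rewrite -ltnS; apply: leq_trans leSt; apply: proper_card.
  by rewrite properC setUC properUl // sub1set.
have IH c' : ncl_on (k |: S) c' -> forall g', commspan j y (wcomm c' g').
  by move=> nc' g'; apply: (IHt (k |: S)) => //; rewrite in_setU1 jS orbT.
split=> [|g']; first exact: (commspan_wcomm_letter e IH jS kS nc).
apply: IH => i; rewrite in_setU1 => /predU1P[->|iS].
- exact/ncl_wcommr/ncl_letter.
- exact/ncl_wcomml/nc.
Qed.

Lemma commspan_wcomm c g : ncl j c -> commspan j y (wcomm c g).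
Proof.
move=> nc; apply: (@commspan_wcomm_on #|'I_m| [set j]); rewrite ?set11 //.
- by rewrite -cardsT subset_leq_card ?subsetT.
- by move=> i; rewrite in_set1 => /eqP->.
Qed.

Lemma commspan_wconj g v : commspan j y v -> commspan j y (wconj g v).
Proof.
move=> sv; rewrite wconj_wcommE; apply: (commspan_cat sv).
exact: commspan_wcomm g (commspan_ncl sv).
Qed.

Lemma commspan_gen v : commspan j gen v -> commspan j y v.
Proof.
move=> [mu [nmu ->]]; elim: (others j) => [|k l IH]; first exact: commspan_nil.
by rewrite cprod_cons; apply: commspan_cat _ IH; apply: commspan_wcomm.
Qed.

End CommspanWcomm.

Section NormalClosureSplitting.
Variables (m : nat) (j : 'I_m).

Lemma ncl_split (w : word m) : ncl j w ->
  exists (a : int) v, commspan j gen v /\ w =R wpow j a ++ v.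
Proof.
elim=> {w} [|g e w _ [a [v [sv def_w]]]|w w' _ [a [v [sv def_w]]] ww'].
- by exists 0%R, [::]; split; first exact: commspan_nil.
- have [a' def_a'] := wpow_cons j e a.
  have [d sd def_d] : exists2 d, commspan j gen d & wconj g [:: (j, e)] =R [:: (j, e)] ++ d.
    exists (wcomm [:: (j, e)] g); last exact: wconj_wcommE.
    by apply/commspan_wcomm/ncl_letter => k _; apply: gen_conj_gen.
  have da : wcommute d (wpow j a) by apply: (ncl_commute (commspan_ncl sd)); apply: ncl_wpow.
  exists a', (d ++ v); split; first exact: commspan_cat.
  by rewrite def_w def_d -catA (catA d) da -catA catA def_a'.
- by exists a, v; split; rewrite // -ww'.
Qed.

Lemma ncl_proj_split (x : word m) : below j.+1 x ->
  exists w, ncl j w /\ x =R w ++ proj j x.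
Proof.
elim: x => [|a x IH] /=; first by exists [::]; split; first exact: ncl_nil.
move=> /andP[a_le /IH [w [nw def_x]]]; rewrite /proj /= -/(proj j x).
case: ifPn => a_lt.
- exists (wconj (winv [:: a]) w); split; first exact: ncl_wconj.
  by rewrite -cat1s {1}def_x /wconj winvK -!catA rf_catK.
- have a_j : a.1 = j by apply/val_inj/eqP; rewrite eqn_leq -ltnS a_le leqNgt a_lt.
  exists ([:: a] ++ w); split; last by rewrite -cat1s {1}def_x catA.
  by apply: ncl_cat nw; case: a a_j {a_le a_lt} => i e /= ->; apply: ncl_letter.
Qed.

End NormalClosureSplitting.

Section SideCommutators.
Variables (m : nat) (side : 'I_m -> bool).
Implicit Types (k : 'I_m) (l : seq 'I_m) (om mu y : 'I_m -> word m) (w : word m).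

Definition zcomm k w := if side k then wcomm w (gen k) else wcomm (gen k) w.

Definition zprod l om := flatten [seq zcomm k (om k) | k <- l].

Lemma zprod_cons k l om : zprod (k :: l) om = zcomm k (om k) ++ zprod l om.
Proof. by []. Qed.

Lemma eq_in_zprod l om om' : {in l, om =1 om'} -> zprod l om = zprod l om'.
Proof. by move=> eq_om; congr flatten; apply/eq_in_map => k /eq_om ->. Qed.

Lemma zcomm_nil k : zcomm k [::] =R [::].
Proof. by rewrite /zcomm; case: ifP; rewrite ?wcomm_nill ?wcomm_nilr. Qed.

Lemma zcomm_cat k w : exists pre yk, gen_conj k yk /\
  forall v, zcomm k (w ++ v) =R zcomm k w ++ wcomm (wconj pre v) yk.
Proof.
rewrite /zcomm; case: (side k).
- exists (wcomm w (gen k)), (wconj (w ++ gen k) (gen k)).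
  by split=> [|v]; [exists (w ++ gen k), true | rf_group].
- exists (gen k ++ wcomm (gen k) w), (wconj w [:: (k, false)]).
  by split=> [|v]; [exists w, false | rf_group].
Qed.

Lemma zprod_mask (p : pred 'I_m) l om :
  zprod l (fun k => if p k then om k else [::]) =R zprod [seq k <- l | p k] om.
Proof.
elim: l => [|k l IH] //=; rewrite zprod_cons IH.
by case: (p k); rewrite // zcomm_nil.
Qed.

Lemma proj_zcomm b k w :
  proj b (zcomm k w) =R if k < b then zcomm k (proj b w) else [::].
Proof.
rewrite /zcomm; case: (side k); rewrite proj_wcomm proj_gen; case: ifP => // _.
- exact: wcomm_nilr.
- exact: wcomm_nill.
Qed.

Lemma proj_zprod b l om :
  proj b (zprod l om) =R zprod [seq k : 'I_m <- l | k < b] (fun k => proj b (om k)).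
Proof.
elim: l => [|k l IH] //=; rewrite zprod_cons proj_cat IH proj_zcomm.
by case: ifP.
Qed.

Lemma zprod_absorb l om : uniq l ->
  exists y, (forall k, k \in l -> gen_conj k (y k)) /\
    forall mu, exists om', zprod l om' =R zprod l om ++ cprod l mu y.
Proof.
elim: l om => [|k l IH] om /=; first by exists (fun _ => [::]); split=> // mu; exists om.
move=> /andP[kl ul]; have [y [y_conj absorb]] := IH om ul.
have [pre [yk [yk_conj zk_cat]]] := zcomm_cat k (om k).
set Z := zprod l om.
exists (fun i => if i == k then wconj Z yk else y i); split.
  move=> i; rewrite in_cons; case: eqVneq => [-> _|_ /= /y_conj //].
  by case: yk_conj => g [e def_yk]; exists (g ++ Z), e; rewrite def_yk wconjM.
move=> mu; have [om' def_om'] := absorb mu.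
exists (fun i => if i == k then om k ++ wconj (winv pre) (wconj (winv Z) (mu k)) else om' i).
have off_k (T : Type) (f g : 'I_m -> T) : {in l, (fun i => if i == k then f i else g i) =1 g}.
  by move=> i il /=; case: eqVneq il kl => // -> ->.
rewrite zprod_cons cprod_cons !eqxx (eq_in_zprod (off_k _ _ _)) def_om'.
rewrite (eq_in_cprod _ (off_k _ _ _)) zk_cat -/Z.
rewrite wconjKV zprod_cons -/Z -!(catA (zcomm k (om k))); apply: cat_rf_Proper => //.
by rewrite (catA (wcomm _ yk)) wcomm_wconjC -catA.
Qed.

End SideCommutators.

Definition ords_below m (b : nat) := [seq i : 'I_m <- enum 'I_m | i < b].

Section OrdinalLists.
Variable m : nat.

Lemma map_val_ords_below b : b <= m -> map val (ords_below m b) = iota 0 b.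
Proof. by move=> bm; rewrite -(filter_iota_ltn 0 bm) -val_enum_ord filter_map. Qed.

Lemma ords_below0 : ords_below m 0 = [::].
Proof. by rewrite /ords_below (@eq_filter _ _ pred0) ?filter_pred0. Qed.

Lemma mem_ords_below b i : (i \in ords_below m b) = (i < b).
Proof. by rewrite mem_filter mem_enum andbT. Qed.

Lemma ords_belowS b (bm : b < m) : ords_below m b.+1 = rcons (ords_below m b) (Ordinal bm).
Proof.
apply: (inj_map val_inj); rewrite map_rcons !map_val_ords_below ?(ltnW bm) //.
by rewrite -addn1 iotaD cats1.
Qed.

Lemma ords_below_full : ords_below m m = enum 'I_m.
Proof. by apply/all_filterP/allP => i _; exact: ltn_ord. Qed.

Lemma ords_below_pred : ords_below m m.-1 = map (widen_ord (leq_pred m)) (enum 'I_m.-1).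
Proof.
apply: (inj_map val_inj); rewrite map_val_ords_below ?leq_pred // -map_comp.
by rewrite (eq_map (g := val)) ?val_enum_ord.
Qed.

Lemma filter_others (j : 'I_m) c : c <= j.+1 ->
  [seq k : 'I_m <- others j | k < c] = ords_below m (minn c j).
Proof.
move=> cj; rewrite /others -filter_predI; apply: eq_filter => k /=.
rewrite leq_min; case: (ltnP k c) => //= kc.
have kj : k <= j by rewrite -ltnS (leq_trans kc cj).
by rewrite ltn_neqAle kj andbT.
Qed.

End OrdinalLists.

Definition powprod m (l : seq 'I_m) (al : 'I_m -> int) : word m :=
  flatten [seq wpow i (al i) | i <- l].

Lemma proj_powprod m b (l : seq 'I_m) al :
  (forall i, i \in l -> i < b) -> proj b (powprod l al) = powprod l al.
Proof.
elim: l => [|i l IH] // lb; rewrite /powprod /= proj_cat proj_wpow ?lb ?mem_head //.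
by rewrite -/(powprod l al) IH // => i' il; rewrite lb // in_cons il orbT.
Qed.

Section NormalForm.
Variables (m : nat) (side : 'I_m -> bool).

Lemma normal_form_step b (bm : b < m) (x : word m) :
  (forall x', below b x' -> exists al om,
     x' =R powprod (rev (ords_below m b)) al ++ zprod side (ords_below m b.-1) om) ->
  below b.+1 x -> exists al om,
     x =R powprod (rev (ords_below m b.+1)) al ++ zprod side (ords_below m b) om.
Proof.
move=> IH xb; set j := Ordinal bm.
have [w [nw def_x]] := @ncl_proj_split m j x xb.
have [al [om def_px]] := IH _ (below_proj b x).
have [a [v [sv def_w]]] := ncl_split nw.
pose P := powprod (rev (ords_below m b)) al.
pose Z := zprod side (ords_below m b.-1) om.
have [y [y_conj absorb]] := zprod_absorb side (fun k => if k < b.-1 then om k else [::])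
  (uniq_others j).
have y_conj' k : k != j -> gen_conj k (y k) by rewrite -mem_others; apply: y_conj.
have [mu [_ def_v']] : commspan j y (wconj (P ++ Z) v).
  by apply/(commspan_gen y_conj')/commspan_wconj => // k _; apply: gen_conj_gen.
have [om' def_om'] := absorb mu.
have def_Z : Z =R zprod side (others j) (fun k => if k < b.-1 then om k else [::]).
  by rewrite zprod_mask filter_others ?(minn_idPl (leq_pred b)) // (leq_trans (leq_pred b)).
have {}def_x : x =R wpow j a ++ P ++ zprod side (others j) om'.
  by rewrite def_x def_w def_px -/P -/Z -catA (wconjC v) def_v' def_Z -!catA -def_om'.
have := proj_rf_eq b.+1 def_x; rewrite proj_below // !proj_cat proj_wpow //.
rewrite proj_powprod; last by move=> i; rewrite mem_rev mem_ords_below => /ltnW.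
rewrite proj_zprod filter_others // (minn_idPr (leqnSn b)) => {}def_x.
exists (fun i => if i == j then a else al i), (fun k => proj b.+1 (om' k)).
suff -> : powprod (rev (ords_below m b.+1)) (fun i => if i == j then a else al i) =
  wpow j a ++ P by rewrite def_x catA.
rewrite ords_belowS rev_rcons /powprod /= eqxx; congr (_ ++ flatten _).
apply/eq_in_map => i; rewrite mem_rev mem_ords_below => ib.
by rewrite ifN // -val_eqE neq_ltn ib.
Qed.

Lemma normal_form b (x : word m) : b <= m -> below b x -> exists al om,
  x =R powprod (rev (ords_below m b)) al ++ zprod side (ords_below m b.-1) om.
Proof.
elim: b x => [|b IH] x bm xb.
  by case: x xb => // _; exists (fun _ => 0%R), (fun _ => [::]); rewrite ords_below0.
by apply: normal_form_step => // x'; apply: IH; apply: ltnW.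
Qed.

End NormalForm.

Theorem theorem4p1 (m : nat) (hm : (1 <= m)%N) (x : word m)
    (form : 'I_m.-1 -> bool) :
  exists (alpha : 'I_m -> int) (omega : 'I_m.-1 -> word m),
    rf_eq x
      (flatten [seq wpow i (alpha i) | i <- rev (enum 'I_m)] ++
       flatten [seq (if form j
                     then wcomm (omega j) (gen (widen_ord (leq_pred m) j))
                     else wcomm (gen (widen_ord (leq_pred m) j)) (omega j))
               | j <- enum 'I_m.-1]).
Proof.
pose side (k : 'I_m) := oapp form true (insub (val k)).
have xm : below m x by apply/allP => a _; exact: ltn_ord.
have [alpha [om def_x]] := normal_form side (leqnn m) xm.
exists alpha, (fun j => om (widen_ord (leq_pred m) j)).
rewrite def_x ords_below_full; apply: cat_rf_Proper => //.
rewrite ords_below_pred /zprod -map_comp.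
by under eq_map => j do rewrite /= /zcomm /side /= valK.
Qed.
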